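(* For every $a\in C\ell_{1,2}$, $\det(L(a))=\det(R(a))=(N(a)^2+4T(a)^2)^2=P(a)^2$.
   Context: $C\ell_{1,2}$ is the real Clifford algebra generated by $i_1,i_2,i_3$ with $i_1^2=1$, $i_2^2=i_3^2=-1$ and $i_ti_m=-i_mi_t$ for $t\neq m$, with real basis $e_0=1$, $e_1=i_1$, $e_2=i_2$, $e_3=i_1i_2$, $e_4=i_3$, $e_5=i_1i_3$, $e_6=i_2i_3$, $e_7=i_1i_2i_3$. For $x=\sum_{t=0}^7x_te_t$ write $\overrightarrow{x}=(x_0,\dots,x_7)^T\in\mathbb{R}^8$. For $a\in C\ell_{1,2}$, $L(a)$ and $R(a)$ are the real $8\times8$ matrices with $\overrightarrow{ax}=L(a)\overrightarrow{x}$ and $\overrightarrow{xa}=R(a)\overrightarrow{x}$ for all $x$. For $a=\sum a_te_t$: $N(a)=a_0^2-a_1^2+a_2^2-a_3^2+a_4^2-a_5^2+a_6^2-a_7^2$, $T(a)=a_0a_7+a_2a_5-a_1a_6-a_3a_4$, $P(a)=N(a)^2+4T(a)^2$. *)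

From HB Require Import structures.
From mathcomp Require Import all_boot all_order all_algebra.
Set Implicit Arguments. Unset Strict Implicit. Unset Printing Implicit Defensive.
Import Order.TTheory GRing.Theory Num.Theory.
Local Open Scope ring_scope.

(* Basis blades of Cl_{1,2}: the basis element e_t (t < 8) is the ordered
   product of the generators i_{j+1} for which bit j of t is set:
   e_0 = 1, e_1 = i1, e_2 = i2, e_3 = i1 i2, e_4 = i3, e_5 = i1 i3,
   e_6 = i2 i3, e_7 = i1 i2 i3 -- exactly the basis of the paper. *)

Definition clbit (j n : nat) : bool := odd (n %/ 2 ^ j).

(* index of the blade e_s e_t (symmetric difference of generator sets) *)
Definition cl_idx (s t : nat) : nat :=
  \sum_(j < 3) (clbit j s != clbit j t) * 2 ^ j.

(* number of transpositions needed to reorder e_s e_t *)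
Definition cl_swaps (s t : nat) : nat :=
  \sum_(a < 3) \sum_(b < 3) ((b < a)%N && clbit a s && clbit b t).

(* number of common generators with square -1 (i2 and i3, bits 1 and 2);
   i1 (bit 0) has square +1 *)
Definition cl_negsq (s t : nat) : nat :=
  (clbit 1 s && clbit 1 t) + (clbit 2 s && clbit 2 t).

(* e_s e_t = cl_sign s t * e_(cl_idx s t) *)
Definition cl_sign {R : ringType} (s t : nat) : R :=
  (-1) ^+ (cl_swaps s t + cl_negsq s t).

(* Elements x = sum_t x_t e_t of Cl_{1,2} over R, represented by their
   coordinate column vector (x_0, ..., x_7)^T. *)
Definition clmul {R : ringType} (a x : 'cV[R]_8) : 'cV[R]_8 :=
  \col_(k < 8) \sum_(s < 8) \sum_(t < 8)
     (if cl_idx s t == k then cl_sign s t * a s 0 * x t 0 else 0).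

Definition clbasis {R : ringType} (t : 'I_8) : 'cV[R]_8 := delta_mx t 0.

Definition Lmx {R : ringType} (a : 'cV[R]_8) : 'M[R]_8 :=
  \matrix_(k < 8, t < 8) (clmul a (clbasis t)) k 0.

Definition Rmx {R : ringType} (a : 'cV[R]_8) : 'M[R]_8 :=
  \matrix_(k < 8, t < 8) (clmul (clbasis t) a) k 0.

Definition cco {R : ringType} (a : 'cV[R]_8) (i : nat) : R := a (inord i) 0.

Definition Nf {R : ringType} (a : 'cV[R]_8) : R :=
  cco a 0 ^+ 2 - cco a 1 ^+ 2 + cco a 2 ^+ 2 - cco a 3 ^+ 2
  + cco a 4 ^+ 2 - cco a 5 ^+ 2 + cco a 6 ^+ 2 - cco a 7 ^+ 2.

Definition Tf {R : ringType} (a : 'cV[R]_8) : R :=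
  cco a 0 * cco a 7 + cco a 2 * cco a 5 - cco a 1 * cco a 6 - cco a 3 * cco a 4.

Definition Pf {R : ringType} (a : 'cV[R]_8) : R :=
  Nf a ^+ 2 + 4 * Tf a ^+ 2.

(* Since i1^2 = 1, the elements 1 + i1 and 1 - i1 generate complementary
   4-dimensional left ideals of Cl_{1,2}, both preserved by left multiplication,
   so L(a) is block diagonal in a basis adapted to them.  The block on Cl(1 + i1)
   is a 4x4 matrix whose determinant expands to P(a); the automorphism i1 |-> -i1
   swaps the two ideals, so the other block is the first one at the image a' of a,
   and P(a') = P(a).  The reversion is an anti-automorphism fixing P, so R(a) is
   conjugate, by a diagonal sign matrix, to L of the reversed element. *)

From HB Require Import structures.
From mathcomp Require Import all_boot all_order all_algebra.
From mathcomp Require Import ring.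
Import Order.TTheory GRing.Theory Num.Theory.
Local Open Scope ring_scope.

Lemma cl_idxE s t : cl_idx s t =
  ((clbit 0 s != clbit 0 t) + (clbit 1 s != clbit 1 t) * 2 + (clbit 2 s != clbit 2 t) * 4)%N.
Proof. by rewrite /cl_idx !big_ord_recr big_ord0 /= muln1. Qed.

Lemma cl_swapsE s t : cl_swaps s t =
  ((clbit 1 s && clbit 0 t) + (clbit 2 s && clbit 0 t) + (clbit 2 s && clbit 1 t))%N.
Proof. by rewrite /cl_swaps !big_ord_recr !big_ord0 /= !add0n !addn0 addnA. Qed.

Lemma cl_idxC s t : cl_idx s t = cl_idx t s.
Proof. by apply: eq_bigr => j _; rewrite eq_sym. Qed.

Lemma clbit_cl_idx j s t : (j < 3)%N -> clbit j (cl_idx s t) = (clbit j s != clbit j t).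
Proof.
rewrite cl_idxE; case: j => [|[|[|//]]] _.
all: by case: (clbit 0 s != _); case: (clbit 1 s != _); case: (clbit 2 s != _).
Qed.

Lemma cl_idx_lt s t : (cl_idx s t < 8)%N.
Proof.
by rewrite cl_idxE; case: (clbit 0 s != _); case: (clbit 1 s != _); case: (clbit 2 s != _).
Qed.

Definition cl_ord (s t : 'I_8) : 'I_8 := Ordinal (cl_idx_lt s t).

Lemma cl_idxK (s t : 'I_8) : cl_idx (cl_idx s t) t = s.
Proof.
case: s t => [s lts] [t ltt] /=.
by do 8?[case: s lts => [|s] lts]; do 8?[case: t ltt => [|t] ltt]; rewrite // !cl_idxE.
Qed.

Lemma cl_idx_eq (s t k : 'I_8) : (cl_idx s t == k) = (s == cl_ord k t).
Proof.
apply/eqP/eqP => [st_k | ->]; last exact: cl_idxK.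
by apply: val_inj; rewrite /= -st_k cl_idxK.
Qed.

Lemma ccoE {R : nzRingType} (a : 'cV[R]_8) (i : 'I_8) : cco a i = a i 0.
Proof. by rewrite /cco inord_val. Qed.

Lemma clmul_basisr {R : nzRingType} (a : 'cV[R]_8) (t k : 'I_8) :
  clmul a (clbasis t) k 0 = \sum_(s < 8) (if cl_idx s t == k then cl_sign s t * a s 0 else 0).
Proof.
rewrite mxE; apply: eq_bigr => s _; rewrite (bigD1 t) //= big1 => [|u /negbTE ne].
  by rewrite !mxE !eqxx mulr1 addr0.
by rewrite !mxE ne mulr0; case: ifP.
Qed.

Lemma clmul_basisl {R : nzRingType} (a : 'cV[R]_8) (s k : 'I_8) :
  clmul (clbasis s) a k 0 = \sum_(t < 8) (if cl_idx s t == k then cl_sign s t * a t 0 else 0).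
Proof.
rewrite mxE (bigD1 s) //= [X in _ + X]big1 => [|u /negbTE ne]; last first.
  by apply: big1 => t _; rewrite !mxE ne mulr0 mul0r; case: ifP.
by rewrite addr0; apply: eq_bigr => t _; rewrite !mxE !eqxx mulr1.
Qed.

Lemma Lmx_entry {R : nzRingType} (a : 'cV[R]_8) (k t : 'I_8) :
  Lmx a k t = cl_sign (cl_idx k t) t * cco a (cl_idx k t).
Proof.
rewrite mxE clmul_basisr (bigD1 (cl_ord k t)) //= big1 => [|s ne].
  by rewrite cl_idxK eqxx addr0 -(ccoE a (cl_ord k t)).
by rewrite cl_idx_eq (negbTE ne).
Qed.

Lemma Rmx_entry {R : nzRingType} (a : 'cV[R]_8) (k t : 'I_8) :
  Rmx a k t = cl_sign t (cl_idx k t) * cco a (cl_idx k t).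
Proof.
rewrite mxE clmul_basisl (bigD1 (cl_ord k t)) //= big1 => [|u ne].
  by rewrite cl_idxC cl_idxK eqxx addr0 -(ccoE a (cl_ord k t)).
by rewrite cl_idxC cl_idx_eq (negbTE ne).
Qed.

Definition sgnmx {R : nzRingType} {n} (e : nat -> nat) : 'M[R]_n :=
  diag_mx (\row_i (-1) ^+ e i).

Lemma sgnmxK {R : nzRingType} n (e : nat -> nat) : sgnmx e *m sgnmx e = 1 :> 'M[R]_n.
Proof.
apply/matrixP => i j; rewrite mul_diag_mx !mxE.
by case: (i == j); rewrite ?mulr0 // mulr1n -expr2 sqrr_sign.
Qed.

Lemma sgnmx_conjE {R : nzRingType} n (e : nat -> nat) (A : 'M[R]_n) i j :
  (sgnmx e *m A *m sgnmx e) i j = (-1) ^+ e i * A i j * (-1) ^+ e j.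
Proof. by rewrite mul_mx_diag mul_diag_mx !mxE. Qed.

Lemma det_sgnmx_conj {R : comNzRingType} n (e : nat -> nat) (A : 'M[R]_n) :
  \det (sgnmx e *m A *m sgnmx e) = \det A.
Proof. by rewrite !det_mulmx mulrAC -det_mulmx sgnmxK det1 mul1r. Qed.

Lemma cco_sgnmx {R : nzRingType} (e : nat -> nat) (a : 'cV[R]_8) i :
  (i < 8)%N -> cco (sgnmx e *m a) i = (-1) ^+ e i * cco a i.
Proof. by move=> lti; rewrite /cco mul_diag_mx !mxE inordK. Qed.

(* the automorphism of Cl_{1,2} changing the sign of the generator i_(j+1) *)
Definition flipmx {R : nzRingType} (j : nat) : 'M[R]_8 := sgnmx (clbit j).

Lemma Lmx_flip {R : comNzRingType} j (a : 'cV[R]_8) : (j < 3)%N ->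
  Lmx (flipmx j *m a) = flipmx j *m Lmx a *m flipmx j.
Proof.
move=> ltj; apply/matrixP => k t.
rewrite sgnmx_conjE !Lmx_entry cco_sgnmx ?cl_idx_lt // clbit_cl_idx //.
by case: (clbit j k); case: (clbit j t) => /=; ring.
Qed.

Definition cl_grade (t : nat) : nat := (clbit 0 t + clbit 1 t + clbit 2 t)%N.

(* the reversion e_t |-> (-1)^C(grade t, 2) e_t, which reverses products *)
Definition revmx {R : nzRingType} : 'M[R]_8 := sgnmx (fun t => 'C(cl_grade t, 2)).

Lemma cl_sign_rev {R : nzRingType} (s t : 'I_8) :
  cl_sign t s = (-1) ^+ 'C(cl_grade s, 2) * (-1) ^+ 'C(cl_grade t, 2) *
                (-1) ^+ 'C(cl_grade (cl_idx s t), 2) * cl_sign s t :> R.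
Proof.
rewrite /cl_sign -!exprD -signr_odd -[RHS]signr_odd; congr (_ ^+ nat_of_bool _).
case: s t => [s lts] [t ltt] /=.
by do 8?[case: s lts => [|s] lts]; do 8?[case: t ltt => [|t] ltt]; rewrite // !cl_idxE !cl_swapsE.
Qed.

Lemma Rmx_rev {R : comNzRingType} (a : 'cV[R]_8) :
  Rmx a = revmx *m Lmx (revmx *m a) *m revmx.
Proof.
apply/matrixP => k t.
rewrite sgnmx_conjE Lmx_entry Rmx_entry cco_sgnmx ?cl_idx_lt //.
by rewrite (cl_sign_rev (cl_ord k t)) cl_idxK; ring.
Qed.

Lemma Pf_flip {R : comNzRingType} (a : 'cV[R]_8) : Pf (flipmx 0 *m a) = Pf a.
Proof. by rewrite /Pf /Nf /Tf !cco_sgnmx //=; ring. Qed.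

Lemma Pf_rev {R : comNzRingType} (a : 'cV[R]_8) : Pf (revmx *m a) = Pf a.
Proof. by rewrite /Pf /Nf /Tf !cco_sgnmx //=; ring. Qed.

Definition mxfun {R : nzRingType} m n (f : nat -> nat -> R) : 'M[R]_(m, n) :=
  \matrix_(i < m, j < n) f i j.

Definition mx_of_seq {R : nzRingType} m n (rows : seq (seq R)) : 'M[R]_(m, n) :=
  mxfun m n (fun i j => nth 0 (nth [::] rows i) j).

Lemma expand_det_mxfun {R : comNzRingType} n (f : nat -> nat -> R) :
  \det (mxfun n.+1 n.+1 f) =
  \sum_(j < n.+1) f 0%N j * ((-1) ^+ j * \det (mxfun n n (fun i k => f i.+1 (bump j k)))).
Proof.
rewrite (expand_det_row _ ord0); apply: eq_bigr => j _.
rewrite /cofactor !mxE add0n; congr (_ * (_ * \det _)).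
by apply/matrixP => i k; rewrite !mxE.
Qed.

(* columns e_0 (1 + i1), e_2 (1 + i1), e_4 (1 + i1), e_6 (1 + i1): a basis of
   the left ideal Cl(1 + i1) *)
Definition ideal_plus {R : nzRingType} : 'M[R]_(8, 4) := mx_of_seq 8 4
  [:: [:: 1;  0;  0; 0];
      [:: 1;  0;  0; 0];
      [:: 0;  1;  0; 0];
      [:: 0; -1;  0; 0];
      [:: 0;  0;  1; 0];
      [:: 0;  0; -1; 0];
      [:: 0;  0;  0; 1];
      [:: 0;  0;  0; 1]].

Definition ideal_minus {R : nzRingType} : 'M[R]_(8, 4) := flipmx 0 *m ideal_plus.

Definition ideal_basis {R : nzRingType} : 'M[R]_(8, 4 + 4) := row_mx ideal_plus ideal_minus.

Definition Lmx_plus {R : nzRingType} (a : 'cV[R]_8) : 'M[R]_4 :=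
  let c := cco a in mx_of_seq 4 4
  [:: [:: c 0 + c 1; - c 2 - c 3; - c 4 - c 5; - c 6 - c 7];
      [:: c 2 - c 3;   c 0 - c 1; - c 6 + c 7;   c 4 - c 5];
      [:: c 4 - c 5;   c 6 - c 7;   c 0 - c 1; - c 2 + c 3];
      [:: c 6 + c 7; - c 4 - c 5;   c 2 + c 3;   c 0 + c 1]].

Ltac case_ord i := let lti := fresh "lti" in
  case: i => [[|[|[|[|[|[|[|[|?]]]]]]]] lti] //=.

Lemma Lmx_ideal_plus {R : comNzRingType} (a : 'cV[R]_8) :
  Lmx a *m ideal_plus = ideal_plus *m Lmx_plus a.
Proof.
apply/matrixP => i j; rewrite !mxE !big_ord_recr !big_ord0 /= !Lmx_entry !mxE /=.
by case_ord i; case_ord j; rewrite ?cl_idxE /cl_sign ?cl_swapsE /=; ring.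
Qed.

Lemma Lmx_ideal_minus {R : comNzRingType} (a : 'cV[R]_8) :
  Lmx a *m ideal_minus = ideal_minus *m Lmx_plus (flipmx 0 *m a).
Proof.
have -> : Lmx a = flipmx 0 *m Lmx (flipmx 0 *m a) *m flipmx 0.
  by rewrite Lmx_flip // !mulmxA sgnmxK mul1mx -mulmxA sgnmxK mulmx1.
rewrite /ideal_minus -!mulmxA (mulmxA (flipmx 0) (flipmx 0)) sgnmxK mul1mx.
by rewrite Lmx_ideal_plus.
Qed.

Lemma ideal_basis_tr_mul {R : comNzRingType} :
  ideal_basis^T *m ideal_basis = 2%:M :> 'M[R]_(4 + 4).
Proof.
rewrite /ideal_basis /ideal_minus /flipmx /sgnmx mul_diag_mx tr_row_mx mul_col_row.
rewrite (scalar_mx_block 4 4); congr block_mx.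
all: apply/matrixP => i j; rewrite !mxE !big_ord_recr !big_ord0 /= !mxE /=.
all: by case_ord i; case_ord j; ring.
Qed.

Lemma det_ideal_basis_neq0 {R : numDomainType} : \det (ideal_basis : 'M[R]_(8, 4 + 4)) != 0.
Proof.
have := congr1 determinant (@ideal_basis_tr_mul R).
rewrite det_mulmx det_tr det_scalar => detPP; apply/eqP => detP0.
by move: detPP; rewrite detP0 mul0r => /eqP; rewrite eq_sym expf_eq0 pnatr_eq0.
Qed.

Lemma det_Lmx_block {R : numDomainType} (a : 'cV[R]_8) :
  \det (Lmx a) = \det (Lmx_plus a) * \det (Lmx_plus (flipmx 0 *m a)).
Proof.
have LP : Lmx a *m ideal_basis =
          ideal_basis *m block_mx (Lmx_plus a) 0 0 (Lmx_plus (flipmx 0 *m a)).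
  by rewrite mul_mx_row mul_row_block !mulmx0 addr0 add0r Lmx_ideal_plus Lmx_ideal_minus.
apply: (mulIf det_ideal_basis_neq0).
by rewrite -det_mulmx LP det_mulmx (det_ublock (Lmx_plus a)) mulrC.
Qed.

Lemma det_Lmx_plus {R : comNzRingType} (a : 'cV[R]_8) : \det (Lmx_plus a) = Pf a.
Proof.
rewrite /Lmx_plus /mx_of_seq /=.
do 4 rewrite !expand_det_mxfun !big_ord_recr !big_ord0 /=.
by rewrite det_mx00 /Pf /Nf /Tf; ring.
Qed.

Lemma det_Lmx {R : numDomainType} (a : 'cV[R]_8) : \det (Lmx a) = Pf a ^+ 2.
Proof. by rewrite det_Lmx_block !det_Lmx_plus Pf_flip expr2. Qed.

Lemma det_Rmx {R : numDomainType} (a : 'cV[R]_8) : \det (Rmx a) = Pf a ^+ 2.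
Proof. by rewrite Rmx_rev det_sgnmx_conj det_Lmx Pf_rev. Qed.

Theorem proposition2p4 (R : realFieldType) (a : 'cV[R]_8) :
  \det (Lmx a) = (Nf a ^+ 2 + 4 * Tf a ^+ 2) ^+ 2 /\
  \det (Rmx a) = (Nf a ^+ 2 + 4 * Tf a ^+ 2) ^+ 2 /\
  (Nf a ^+ 2 + 4 * Tf a ^+ 2) ^+ 2 = Pf a ^+ 2.
Proof.
have PfE : Pf a = Nf a ^+ 2 + 4 * Tf a ^+ 2 by [].
by rewrite det_Lmx det_Rmx PfE.
Qed.
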